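(* Let $G=(V,E)$ be a $d$-regular graph with $d\ge 1$ that is a UNN, and let $s:E\to\{-1,+1\}$ be any signing. Then the 2-lift $\hat G$ of $G$ with respect to $s$ is a UNN.
   Context: All graphs are finite, simple and undirected. For a vertex $v$, $\mathrm{nb}(v)$ denotes its set of neighbors (a vertex is not its own neighbor). A graph is a unique-neighborhood network (UNN) if distinct vertices have distinct neighborhoods. The 2-lift of $G=(V,E)$ with respect to a signing $s:E\to\{-1,+1\}$ is the graph $\hat G$ with vertex set $\{x_1,x_2 : x\in V\}$ (two copies of each vertex) and, for each edge $\{x,y\}\in E$: the edges $\{x_1,y_1\},\{x_2,y_2\}$ if $s(\{x,y\})=+1$, and the edges $\{x_1,y_2\},\{x_2,y_1\}$ if $s(\{x,y\})=-1$; $\hat G$ has no other edges. *)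

From mathcomp Require Import all_boot.
Set Implicit Arguments. Unset Strict Implicit. Unset Printing Implicit Defensive.

Definition simple_graph (T : finType) (e : rel T) : Prop :=
  symmetric e /\ irreflexive e.

Definition nb (T : finType) (e : rel T) (v : T) : {set T} := [set u | e v u].

Definition regular (T : finType) (e : rel T) (d : nat) : Prop :=
  forall v : T, #|nb e v| = d.

Definition UNN (T : finType) (e : rel T) : Prop :=
  forall x y : T, x != y -> nb e x != nb e y.

(* A signing s : E -> {-1,+1}, encoded as a symmetric boolean function on
   pairs of vertices (true = +1, false = -1); only its values on edges matter.
   Symmetry makes it a function of the unordered edge {x,y}. *)
Definition signing (T : finType) (s : T -> T -> bool) : Prop :=
  forall x y : T, s x y = s y x.

(* The 2-lift: vertex x_1 is (x, false), x_2 is (x, true).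
   {x_i, y_j} is an edge iff {x,y} in E and (i = j if s = +1, i <> j if s = -1). *)
Definition lift2 (T : finType) (e : rel T) (s : T -> T -> bool) : rel (T * bool) :=
  fun u w => e u.1 w.1 && (if s u.1 w.1 then u.2 == w.2 else u.2 != w.2).

(* The neighbourhood of (x, i) in the 2-lift is the neighbourhood of x, each
   neighbour z carrying the unique sheet index compatible with the sign of
   {x, z}.  Projecting to the first coordinate, equal neighbourhoods in the
   lift give equal neighbourhoods downstairs, hence x = y by the UNN property;
   and the two copies of x have disjoint nonempty neighbourhoods as soon as x
   is not isolated, which regularity with d >= 1 guarantees. *)

From mathcomp Require Import all_boot.

Set Implicit Arguments.
Unset Strict Implicit.
Unset Printing Implicit Defensive.

Section TwoLift.

Variables (T : finType) (e : rel T) (s : T -> T -> bool).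

Definition lift_index (x z : T) (i : bool) : bool :=
  if s x z then i else ~~ i.

Lemma in_nb_lift2 (x z : T) (i b : bool) :
  ((z, b) \in nb (lift2 e s) (x, i)) = e x z && (b == lift_index x z i).
Proof.
by rewrite inE /lift2 /lift_index /=; case: (s x z); case: i; case: b.
Qed.

Lemma lift_index_inj (x z : T) : injective (lift_index x z).
Proof. by rewrite /lift_index; case: (s x z) => [] [] []. Qed.

Lemma nb_lift2_proj (x y : T) (i j : bool) :
  nb (lift2 e s) (x, i) = nb (lift2 e s) (y, j) -> nb e x = nb e y.
Proof.
move=> eq_nb; apply/setP => z; rewrite !inE.
have lift_nb b : ((z, b) \in nb (lift2 e s) (x, i)) = ((z, b) \in nb (lift2 e s) (y, j)).
  by rewrite eq_nb.
apply/idP/idP => [exz | eyz].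
- by move: (lift_nb (lift_index x z i)); rewrite !in_nb_lift2 exz eqxx => /esym/andP[].
- by move: (lift_nb (lift_index y z j)); rewrite !in_nb_lift2 eyz eqxx => /andP[].
Qed.

Lemma nb_lift2_sheets_neq (x : T) (i j : bool) :
  nb e x != set0 -> i != j -> nb (lift2 e s) (x, i) != nb (lift2 e s) (x, j).
Proof.
case/set0Pn => z; rewrite inE => exz neq_ij; apply/negP => /eqP eq_nb.
move: (congr1 (fun A : {set T * bool} => (z, lift_index x z i) \in A) eq_nb).
rewrite /= !in_nb_lift2 exz eqxx /= => /esym/eqP/lift_index_inj eq_ji.
by rewrite eq_ji eqxx in neq_ij.
Qed.

Lemma lift2_UNN :
  (forall x : T, nb e x != set0) -> UNN e -> UNN (lift2 e s).
Proof.
move=> nb_n0 unn [x i] [y j] neq; apply/negP => /eqP eq_nb.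
have eq_xy : x = y.
  by apply/eqP/negPn/negP => /unn; rewrite (nb_lift2_proj eq_nb) eqxx.
subst y; have neq_ij : i != j by apply: contra neq => /eqP ->.
by move: (nb_lift2_sheets_neq (nb_n0 x) neq_ij); rewrite eq_nb eqxx.
Qed.

End TwoLift.

Theorem lemma5 (T : finType) (e : rel T) (d : nat) (s : T -> T -> bool) :
  simple_graph e -> (1 <= d)%N -> regular e d -> UNN e -> signing s ->
  UNN (lift2 e s).
Proof.
move=> _ d_gt0 reg unn _; apply: lift2_UNN unn => x.
by rewrite -card_gt0 reg.
Qed.
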